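(* Let $f:\mathbb{R}^n\to\overline{\mathbb{R}}$ be proper lower semicontinuous, $(\bar x,\bar v)\in\operatorname{gph}\partial f$, and $0<\varepsilon_2<\varepsilon_1$. Then: (i) for all $(x,v)\in\operatorname{gph}T_{\varepsilon_2}(\bar x,\bar v)$, $\operatorname{gph}T_{\varepsilon_1-\varepsilon_2}(x,v)\subset\operatorname{gph}T_{\varepsilon_1}(\bar x,\bar v)$; (ii) let $s\in\mathbb{R}$ and suppose $f$ is variationally $s$-convex at $\bar x$ for $\bar v$ with corresponding radius $\varepsilon_1$, i.e. $f(x')\ge f(x)+\langle v,x'-x\rangle+\frac s2\|x'-x\|^2$ for all $(x,v)\in\operatorname{gph}T_{\varepsilon_1}(\bar x,\bar v)$ and $x'\in B(\bar x,\varepsilon_1)$. Then for every $(x,v)\in\operatorname{gph}T_{\varepsilon_2}(\bar x,\bar v)$, $f$ is variationally $s$-convex at $x$ for $v$ with radius $\varepsilon_1-\varepsilon_2$, i.e. $f(x')\ge f(\tilde x)+\langle\tilde v,x'-\tilde x\rangle+\frac s2\|x'-\tilde x\|^2$ for all $(\tilde x,\tilde v)\in\operatorname{gph}T_{\varepsilon_1-\varepsilon_2}(x,v)$ and $x'\in B(x,\varepsilon_1-\varepsilon_2)$.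
   Context: $\partial f$: limiting subdifferential. $B(x,r)$: open ball. For $(x,v)\in\operatorname{gph}\partial f$ and $\varepsilon>0$: $\operatorname{gph}T_\varepsilon(x,v)=\{(\tilde x,\tilde v)\in\operatorname{gph}\partial f:\tilde x\in B(x,\varepsilon),\tilde v\in B(v,\varepsilon),f(\tilde x)<f(x)+\varepsilon\}$ ($f$-attentive $\varepsilon$-localization of $\partial f$ around $(x,v)$). Variational $s$-convexity at $\bar x$ for $\bar v$ is characterized by: $f(\bar x)$ finite, $f$ l.s.c. at $\bar x$, and existence of $\varepsilon>0$ and a neighborhood of $\bar x$ on which the inequality $f(x')\ge f(x)+\langle v,x'-x\rangle+\frac s2\|x'-x\|^2$ holds for all $(x,v)\in\operatorname{gph}T_\varepsilon(\bar x,\bar v)$. *)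

(* R^n is 'rV[R]_n with the Euclidean
   inner product and norm; f : R^n -> \bar R (extended reals). *)
From HB Require Import structures.
From mathcomp Require Import all_boot all_order all_algebra.
From mathcomp Require Import all_classical all_reals ereal.
Set Implicit Arguments. Unset Strict Implicit. Unset Printing Implicit Defensive.
Import Order.TTheory GRing.Theory Num.Theory.
Local Open Scope ring_scope.
Local Open Scope ereal_scope.

Section Defs.
Variables (R : realType) (n : nat).
Notation V := 'rV[R]_n.

Definition dotp (u w : V) : R := (\sum_(i < n) u ord0 i * w ord0 i)%R.
Definition enorm (u : V) : R := Num.sqrt (dotp u u).

Definition inball (x : V) (r : R) (y : V) : Prop := (enorm (y - x) < r)%R.

Definition proper_fun (f : V -> \bar R) : Prop :=
  (forall x, f x != -oo) /\ (exists x, f x \is a fin_num).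

Definition lsc_at (f : V -> \bar R) (x : V) : Prop :=
  forall a : R, a%:E < f x ->
    exists2 d : R, (0 < d)%R & forall y, inball x d y -> a%:E < f y.
Definition lsc (f : V -> \bar R) : Prop := forall x, lsc_at f x.

(* regular (Frechet) subgradient:
   f(x) finite and liminf_{y->x, y<>x} (f y - f x - <v,y-x>)/|y-x| >= 0 *)
Definition regular_subgrad (f : V -> \bar R) (x v : V) : Prop :=
  f x \is a fin_num /\
  forall e : R, (0 < e)%R ->
    exists2 d : R, (0 < d)%R & forall y, inball x d y ->
      f x + (dotp v (y - x) - e * enorm (y - x))%:E <= f y.

Definition seq_cvg (u : nat -> V) (l : V) : Prop :=
  forall e : R, (0 < e)%R -> exists N, forall k, (N <= k)%N -> (enorm (u k - l) < e)%R.

Definition val_cvg (a : nat -> \bar R) (l : \bar R) : Prop :=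
  forall e : R, (0 < e)%R -> exists N, forall k, (N <= k)%N ->
    l - e%:E < a k /\ a k < l + e%:E.

Definition limiting_subgrad (f : V -> \bar R) (x v : V) : Prop :=
  f x \is a fin_num /\
  exists (xs vs : nat -> V),
    seq_cvg xs x /\ val_cvg (fun k => f (xs k)) (f x) /\ seq_cvg vs v /\
    forall k, regular_subgrad f (xs k) (vs k).

Definition gphT (f : V -> \bar R) (eps : R) (x v : V) (xt vt : V) : Prop :=
  limiting_subgrad f xt vt /\ inball x eps xt /\ inball v eps vt /\
  f xt < f x + eps%:E.

Definition var_convex_radius (f : V -> \bar R) (s : R) (x v : V) (eps : R) : Prop :=
  forall xt vt, gphT f eps x v xt vt -> forall x', inball x eps x' ->
    f xt + (dotp vt (x' - xt) + s / 2 * enorm (x' - xt) ^+ 2)%:E <= f x'.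

End Defs.

From HB Require Import structures.
From mathcomp Require Import all_boot all_order all_algebra.
From mathcomp Require Import all_classical all_reals ereal.
From mathcomp Require Import ring lra.
Set Implicit Arguments. Unset Strict Implicit. Unset Printing Implicit Defensive.
Import Order.TTheory GRing.Theory Num.Theory.
Local Open Scope ring_scope.

(* Both parts only use that localizations compose: by the triangle inequality
   B(x, r2) around a point of B(xb, r1) lies in B(xb, r1 + r2), and the value
   bounds f x < f xb + r1 and f xt < f x + r2 add up to f xt < f xb + (r1 + r2).
   So gph T_{r2}(x, v) is contained in gph T_{r1 + r2}(xb, vb), and the
   s-convexity inequality on the larger localization restricts to the smaller
   one. *)

Section Euclidean.
Variables (R : realType) (n : nat).
Implicit Types u w : 'rV[R]_n.

Lemma dotpp_ge0 u : 0 <= dotp u u.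
Proof. by apply: sumr_ge0 => i _; rewrite -expr2 sqr_ge0. Qed.

Lemma dotppD u w :
  dotp (u + w) (u + w) = dotp u u + 2 * dotp u w + dotp w w.
Proof.
rewrite /dotp mulr_sumr -!big_split /=; apply: eq_bigr => i _.
by rewrite !mxE; ring.
Qed.

Lemma enorm_ge0 u : 0 <= enorm u.
Proof. exact: sqrtr_ge0. Qed.

Lemma enorm_sqr u : enorm u ^+ 2 = dotp u u.
Proof. by rewrite sqr_sqrtr ?dotpp_ge0. Qed.

(* Lagrange's identity, obtained by symmetrizing in (i, j):
   2 (|u|^2 |w|^2 - <u, w>^2) = sum_(i, j) (u_i w_j - u_j w_i)^2. *)
Lemma dotp_sqr_le u w : dotp u w ^+ 2 <= dotp u u * dotp w w.
Proof.
pose g i j := (u ord0 i * w ord0 j) ^+ 2 - u ord0 i * w ord0 i * (u ord0 j * w ord0 j).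
have -> : dotp u u * dotp w w = dotp u w ^+ 2 + \sum_i \sum_j g i j.
  rewrite /dotp expr2 !big_distrlr -big_split; apply: eq_bigr => i _.
  by rewrite -big_split; apply: eq_bigr => j _; rewrite /g /=; ring.
have gT : \sum_i \sum_j g i j = \sum_i \sum_j g j i by exact: exchange_big.
have : 0 <= \sum_i \sum_j (g i j + g j i).
  apply: sumr_ge0 => i _; apply: sumr_ge0 => j _.
  have -> : g i j + g j i = (u ord0 i * w ord0 j - u ord0 j * w ord0 i) ^+ 2.
    by rewrite /g; ring.
  exact: sqr_ge0.
under eq_bigr do rewrite big_split /=.
rewrite big_split /= -gT; lra.
Qed.

Lemma dotp_le_enormM u w : dotp u w <= enorm u * enorm w.
Proof.
rewrite /enorm -sqrtrM ?dotpp_ge0 // (le_trans (ler_norm _)) //.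
by rewrite -sqrtr_sqr ler_wsqrtr // dotp_sqr_le.
Qed.

Lemma ler_enormD u w : enorm (u + w) <= enorm u + enorm w.
Proof.
rewrite -ler_sqr ?nnegrE ?addr_ge0 ?enorm_ge0 // sqrrD !enorm_sqr dotppD.
by have := dotp_le_enormM u w; lra.
Qed.

Lemma inball_trans (x y z : 'rV[R]_n) (r s : R) :
  inball x r y -> inball y s z -> inball x (r + s) z.
Proof.
rewrite /inball => xy yz.
have -> : z - x = (z - y) + (y - x) by rewrite addrA subrK.
by rewrite (addrC r); exact: le_lt_trans (ler_enormD _ _) (ltrD yz xy).
Qed.

End Euclidean.

Lemma lte_addE_trans (R : realDomainType) (a b c : \bar R) (r s : R) :
  (a < b + r%:E -> b < c + s%:E -> a < c + (s + r)%:E)%E.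
Proof.
move=> ab bc; apply: (lt_trans ab).
by rewrite EFinD addeA lteD2rE.
Qed.

Section Localization.
Variables (R : realType) (n : nat) (f : 'rV[R]_n -> \bar R).

Lemma gphT_trans (r1 r2 : R) (xb vb x v xt vt : 'rV[R]_n) :
  gphT f r1 xb vb x v -> gphT f r2 x v xt vt -> gphT f (r1 + r2) xb vb xt vt.
Proof.
move=> [_ [xbx [vbv fx]]] [sub_xt [xxt [vvt fxt]]].
split=> //; split; first exact: inball_trans xbx xxt.
split; first exact: inball_trans vbv vvt.
exact: lte_addE_trans fxt fx.
Qed.

Lemma var_convex_radius_trans (s r1 r2 : R) (xb vb x v : 'rV[R]_n) :
  var_convex_radius f s xb vb (r1 + r2) -> gphT f r1 xb vb x v ->
  var_convex_radius f s x v r2.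
Proof.
move=> cvx xv xt vt xtvt x' xx'; apply: cvx; first exact: gphT_trans xv xtvt.
by case: xv => _ [xbx _]; exact: inball_trans xbx xx'.
Qed.

End Localization.

Theorem proposition3p3 (R : realType) (n : nat) (f : 'rV[R]_n -> \bar R)
    (xb vb : 'rV[R]_n) (eps1 eps2 : R) :
  proper_fun f -> lsc f -> limiting_subgrad f xb vb ->
  0 < eps2 -> eps2 < eps1 ->
  (forall x v, gphT f eps2 xb vb x v ->
     forall xt vt, gphT f (eps1 - eps2) x v xt vt -> gphT f eps1 xb vb xt vt)
  /\
  (forall s : R, var_convex_radius f s xb vb eps1 ->
     forall x v, gphT f eps2 xb vb x v -> var_convex_radius f s x v (eps1 - eps2)).
Proof.
move=> _ _ _ _ _; rewrite -{2 3}(subrKC eps2 eps1).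
split=> [x v xv xt vt | s cvx x v].
- exact: gphT_trans xv.
- exact: var_convex_radius_trans cvx.
Qed.
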